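(* Let $k\ge 1$ and let $t_1\ge s_1\ge t_2\ge s_2\ge\cdots\ge t_k\ge s_k\ge 0=:t_{k+1}$ be integers. Let $\tilde A+\lambda\tilde E$ be a complex matrix pencil partitioned into $k$ block rows of sizes $s_1,\dots,s_k$ and $k$ block columns of sizes $t_1,\dots,t_k$, of the form \[ \tilde A+\lambda\tilde E=\begin{bmatrix} 0 & A_{1,2} & \cdots & A_{1,k}\\ & \ddots & \ddots & \vdots\\ & & \ddots & A_{k-1,k}\\ & & & 0\end{bmatrix}+\lambda\begin{bmatrix} E_{1,1} & E_{1,2} & \cdots & E_{1,k}\\ & \ddots & \ddots & \vdots\\ & & \ddots & E_{k-1,k}\\ & & & E_{k,k}\end{bmatrix}, \] where $A_{i,j},E_{i,j}\in\mathbb{C}^{s_i\times t_j}$, all blocks below the block diagonal (for both matrices) and the block-diagonal blocks of $\tilde A$ are zero, and the ''stairs'' have the special form \[ A_{i,i+1}=\begin{bmatrix}\hat A_{i,i+1}\\ 0\end{bmatrix},\qquad E_{i,i}=\begin{bmatrix}0 & \hat E_{i,i}\end{bmatrix}, \] with $\hat A_{i,i+1}\in\mathbb{C}^{t_{i+1}\times t_{i+1}}$ and $\hat E_{i,i}\in\mathbb{C}^{s_i\times s_i}$ upper triangular and invertible. Then there exist unit upper triangular (invertible) matrices $S$ and $T$ such that \[ S^{-1}(\tilde A+\lambda\tilde E)T=\begin{bmatrix}\lambda E_{1,1} & A_{1,2} & 0 & 0\\ & \ddots & \ddots & 0\\ & & \ddots & A_{k-1,k}\\ & & & \lambda E_{k,k}\end{bmatrix},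 \] i.e. all blocks other than the blocks $E_{i,i}$ (in the $\lambda$-coefficient) and $A_{i,i+1}$ (in the constant coefficient) are eliminated, while the blocks $E_{i,i}$ and $A_{i,i+1}$ themselves are left unaltered; so the transformed pencil is block bidiagonal.
   Context: A matrix is unit upper triangular if it is upper triangular with all diagonal entries equal to $1$. The block partition of the transformed pencil is the same as that of $\tilde A+\lambda\tilde E$. *)

From HB Require Import structures.
From mathcomp Require Import all_boot all_order all_algebra.
From mathcomp Require Import complex.
From mathcomp Require Import reals Rstruct.
Set Implicit Arguments. Unset Strict Implicit. Unset Printing Implicit Defensive.
Import Order.TTheory GRing.Theory Num.Theory.
Local Open Scope ring_scope.

Notation CC := (complex Rdefinitions.R).

Definition upper_tri (F : pzRingType) (n : nat) (M : 'M[F]_n) : Prop :=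
  forall r c : 'I_n, (c < r)%N -> M r c = 0.

Definition unit_upper_tri (F : pzRingType) (n : nat) (M : 'M[F]_n) : Prop :=
  upper_tri M /\ forall r : 'I_n, M r r = 1.

(* the top m x q submatrix (first m rows) of B : 'M_(p,q) (padded by 0 if m > p) *)
Definition topblock (F : pzRingType) (m p q : nat) (B : 'M[F]_(p, q)) : 'M[F]_(m, q) :=
  \matrix_(r < m, c < q) (if @insub nat (fun x => (x < p)%N) 'I_p (val r) is Some r'
                          then B r' c else 0).

(* the right p x m submatrix (last m columns) of B : 'M_(p,q), for m <= q *)
Definition rightblock (F : pzRingType) (m p q : nat) (B : 'M[F]_(p, q)) : 'M[F]_(p, m) :=
  \matrix_(r < p, c < m) (if @insub nat (fun x => (x < q)%N) 'I_q (val c + (q - m))%N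
                          is Some c' then B r c' else 0).

From mathcomp Require Import all_boot all_order all_algebra.
From mathcomp Require Import complex.
From mathcomp Require Import reals Rstruct.
From mathcomp Require Import zify.
Import GRing.Theory.
Local Open Scope ring_scope.
Set Implicit Arguments. Unset Strict Implicit. Unset Printing Implicit Defensive.

(* Write S = 1 + N_S and T = 1 + N_T with N_S, N_T strictly block upper
   triangular, and let A' be the block superdiagonal of A and E' the block
   diagonal of E.  Then A T = S A' and E T = S E' amount to
     (N_S)_{i,l} A_{l,l+1} = (A T - A')_{i,l+1}   for i < l,
     E_{i,i} (N_T)_{i,j}   = (N_S E' - (E - E') T)_{i,j}   for i < j.
   The stair A_{l,l+1} has full column rank and E_{i,i} full row rank, so each
   equation is solved by a one-sided inverse, and its right-hand side only
   involves blocks of N_S and N_T that come earlier in a suitable order.  The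
   solution is therefore a fixed point of block back-substitution, reached
   after finitely many iterations. *)

Lemma iter_fixpoint_by_rank (X I : Type) (rank : I -> nat)
    (agree : I -> X -> X -> Prop) (phi : X -> X) (n : nat) :
  (forall i x y, (forall j, (rank j < rank i)%N -> agree j x y) ->
     agree i (phi x) (phi y)) ->
  (forall i, (rank i < n)%N) ->
  forall x i, agree i (phi (iter n phi x)) (iter n phi x).
Proof.
move=> phi_local rank_lt x.
suff iter_agree m i : (rank i < m)%N -> agree i (iter m.+1 phi x) (iter m phi x).
  by move=> i; exact: iter_agree.
elim: m i => // m IHm i rank_i; rewrite !iterS.
apply: phi_local => j rank_j; apply: IHm.
exact: leq_trans rank_j (ltnSE rank_i).
Qed.

Definition block_upper (R : nmodType) p q (p_ : 'I_p -> nat) (q_ : 'I_q -> nat)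
    (d : nat) (M : 'M[R]_(\sum_i p_ i, \sum_j q_ j)) : Prop :=
  forall (i : 'I_p) (j : 'I_q), (j < i + d)%N -> submxblock M i j = 0.

Section BlockUpper.
Variable R : pzRingType.
Variables (p q r : nat) (p_ : 'I_p -> nat) (q_ : 'I_q -> nat) (r_ : 'I_r -> nat).
Local Notation sp := (\sum_i p_ i)%N.
Local Notation sq := (\sum_i q_ i)%N.
Local Notation sr := (\sum_i r_ i)%N.

Lemma submxblock_mul (X : 'M[R]_(sp, sq)) (Y : 'M[R]_(sq, sr)) i j :
  submxblock (X *m Y) i j = \sum_l submxblock X i l *m submxblock Y l j.
Proof.
by rewrite -{1}[X]submxblockK -{1}[Y]submxblockK mul_mxblock mxblockK.
Qed.

Lemma block_upperW d d' (M : 'M[R]_(sp, sq)) :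
  (d' <= d)%N -> block_upper d M -> block_upper d' M.
Proof. by move=> le_d Mu i j lt_j; apply: Mu; lia. Qed.

Lemma block_upperD d (M N : 'M[R]_(sp, sq)) :
  block_upper d M -> block_upper d N -> block_upper d (M + N).
Proof. by move=> Mu Nu i j lt_j; rewrite submxblockD Mu ?Nu ?addr0. Qed.

Lemma block_upperB d (M N : 'M[R]_(sp, sq)) :
  block_upper d M -> block_upper d N -> block_upper d (M - N).
Proof. by move=> Mu Nu i j lt_j; rewrite submxblockB Mu ?Nu ?subr0. Qed.

Lemma submxblock_mulr_eq d (M : 'M[R]_(sp, sq)) (X Y : 'M[R]_(sq, sr))
    (i : 'I_p) (j : 'I_r) :
  block_upper d M ->
  (forall l : 'I_q, (i + d <= l)%N -> submxblock X l j = submxblock Y l j) ->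
  submxblock (M *m X) i j = submxblock (M *m Y) i j.
Proof.
move=> Mu XY; rewrite !submxblock_mul; apply: eq_bigr => l _.
by have [/XY-> // | lt_l] := leqP (i + d) l; rewrite Mu ?mul0mx.
Qed.

Lemma submxblock_mull_eq d (M : 'M[R]_(sq, sr)) (X Y : 'M[R]_(sp, sq))
    (i : 'I_p) (j : 'I_r) :
  block_upper d M ->
  (forall l : 'I_q, (l + d <= j)%N -> submxblock X i l = submxblock Y i l) ->
  submxblock (X *m M) i j = submxblock (Y *m M) i j.
Proof.
move=> Mu XY; rewrite !submxblock_mul; apply: eq_bigr => l _.
by have [/XY-> // | lt_j] := leqP (l + d) j; rewrite Mu ?mulmx0.
Qed.

Lemma block_upper_mul d1 d2 (M : 'M[R]_(sp, sq)) (N : 'M[R]_(sq, sr)) :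
  block_upper d1 M -> block_upper d2 N -> block_upper (d1 + d2) (M *m N).
Proof.
move=> Mu Nu i j lt_j; rewrite (submxblock_mulr_eq (Y := 0) Mu).
  by rewrite mulmx0 submxblock0.
by move=> l le_l; rewrite Nu ?submxblock0 //; lia.
Qed.

End BlockUpper.

Section BlockParts.
Variables (R : zmodType) (p : nat) (p_ q_ : 'I_p -> nat).
Implicit Type M : 'M[R]_(\sum_i p_ i, \sum_i q_ i).

Definition block_superdiag M : 'M[R]_(\sum_i p_ i, \sum_i q_ i) :=
  \mxblock_(i, j) if val j == (val i).+1 then submxblock M i j else 0.

Definition block_diag M : 'M[R]_(\sum_i p_ i, \sum_i q_ i) :=
  \mxblock_(i, j) if i == j then submxblock M i j else 0.

Lemma block_superdiag_upper M : block_upper 1 (block_superdiag M).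
Proof.
move=> i j lt_j; rewrite mxblockK; case: eqP => // j_eq.
by move: lt_j; rewrite j_eq addn1 ltnn.
Qed.

Lemma block_upper_sub_superdiag M :
  block_upper 1 M -> block_upper 2 (M - block_superdiag M).
Proof.
move=> Mu i j lt_j; rewrite submxblockB mxblockK.
case: eqP => [_ | /= j_neq]; first by rewrite subrr.
by rewrite Mu ?subr0 //; lia.
Qed.

Lemma block_diag_upper M : block_upper 0 (block_diag M).
Proof.
move=> i j lt_j; rewrite mxblockK; case: eqP => // ij.
by move: lt_j; rewrite ij addn0 ltnn.
Qed.

Lemma block_upper_sub_diag M :
  block_upper 0 M -> block_upper 1 (M - block_diag M).
Proof.
move=> Mu i j lt_j; rewrite submxblockB mxblockK.
case: eqP => [<- | ij]; first by rewrite subrr.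
have {}ij : i <> j :> nat by move/val_inj.
by rewrite Mu ?subr0 //; lia.
Qed.

End BlockParts.

Lemma block_upper1_entry (R : nmodType) p (p_ : 'I_p -> nat)
    (N : 'M[R]_(\sum_i p_ i)) :
  block_upper 1 N -> forall r c : 'I_(\sum_i p_ i), (c <= r)%N -> N r c = 0.
Proof.
move=> Nu r c le_cr; rewrite -[N]submxblockK mxE Nu ?mxE // addn1 ltnS.
have : (tagnat.sig1 c <= tagnat.sig1 r)%O by apply: tagnat.le_sig1.
by rewrite leEord.
Qed.

Lemma unit_upper_tri_add1 (R : pzRingType) n (N : 'M[R]_n) :
  (forall r c : 'I_n, (c <= r)%N -> N r c = 0) -> unit_upper_tri (1%:M + N).
Proof.
move=> N0; split=> [r c lt_cr | r];
  rewrite !mxE ?N0 ?addr0 ?eqxx //; last exact: ltnW.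
by rewrite -val_eqE /= gtn_eqF.
Qed.

Lemma unit_upper_tri_unitmx (R : comUnitRingType) n (M : 'M[R]_n) :
  unit_upper_tri M -> M \in unitmx.
Proof.
case=> Mu M1; rewrite unitmxE -det_tr det_trig.
  by rewrite big1 ?unitr1 // => i _; rewrite mxE M1.
by apply/is_trig_mxP => i j lt_ij; rewrite mxE Mu.
Qed.

Lemma topblock_mulmx (R : pzRingType) m p q r
    (X : 'M[R]_(p, q)) (Y : 'M[R]_(q, r)) :
  topblock m (X *m Y) = topblock m X *m Y.
Proof.
apply/matrixP => i j; rewrite mxE [RHS]mxE; under eq_bigr do rewrite mxE.
case: insubP => [i' _ _ | _]; first by rewrite mxE.
by rewrite big1 // => l _; rewrite mul0r.
Qed.

Lemma rightblock_mulmx (R : pzRingType) m p q r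
    (X : 'M[R]_(p, q)) (Y : 'M[R]_(q, r)) :
  rightblock m (X *m Y) = X *m rightblock m Y.
Proof.
apply/matrixP => i j; rewrite mxE [RHS]mxE; under [RHS]eq_bigr do rewrite mxE.
case: insubP => [j' _ _ | _]; first by rewrite mxE.
by rewrite big1 // => l _; rewrite mulr0.
Qed.

Lemma row_full_topblock (F : fieldType) m p (B : 'M[F]_(p, m)) :
  topblock m B \in unitmx -> row_full B.
Proof.
rewrite -[B]mul1mx topblock_mulmx mul1mx => /mxrank_unit rank_top.
by rewrite /row_full eqn_leq rank_leq_col -{1}rank_top mxrankM_maxr.
Qed.

Lemma row_free_rightblock (F : fieldType) m q (B : 'M[F]_(m, q)) :
  rightblock m B \in unitmx -> row_free B.
Proof.
rewrite -[B]mulmx1 rightblock_mulmx mulmx1 => /mxrank_unit rank_right.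
by rewrite /row_free eqn_leq rank_leq_row -{1}rank_right mxrankM_maxl.
Qed.

Section PencilReduction.
Variable F : fieldType.
Variables (k : nat) (s t : 'I_k -> nat).
Local Notation sS := (\sum_i s i)%N.
Local Notation sT := (\sum_i t i)%N.
Variables A E : 'M[F]_(sS, sT).

Hypothesis A_upper : block_upper 1 A.
Hypothesis E_upper : block_upper 0 E.
Hypothesis A_stair_full :
  forall l j : 'I_k, val j = (val l).+1 -> row_full (submxblock A l j).
Hypothesis E_diag_free : forall i, row_free (submxblock E i i).

Local Notation Asup := (block_superdiag A).
Local Notation Ediag := (block_diag E).

(* The sum over j has the single term j = l + 1, or none when l is last. *)
Definition pencil_step (N : 'M[F]_sS * 'M[F]_sT) : 'M[F]_sS * 'M[F]_sT :=
  (\mxblock_(i, l) if (i < l)%N then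
      \sum_(j | val j == (val l).+1)
        submxblock (A *m (1%:M + N.2) - Asup) i j *m pinvmx (submxblock A l j)
    else 0,
   \mxblock_(i, j) if (i < j)%N then
      pinvmx (submxblock E i i) *m
        submxblock (N.1 *m Ediag - (E - Ediag) *m (1%:M + N.2)) i j
    else 0).

(* Block (i, l) of the S-part of [pencil_step N] reads the blocks (m, l + 1),
   m > i, of N.2; block (i, j) of the T-part reads the blocks (i, m), m <= j,
   of N.1 and (m, j), m > i, of N.2.  The weight j + 2 (k - i), with S-blocks
   before T-blocks, strictly decreases along these dependencies, except towards
   blocks with m >= j, which get rank 0. *)
Definition block_rank (b : bool * 'I_k * 'I_k) : nat :=
  let: (onS, i, j) := b in
  if (i < j)%N then (2 * (j + 2 * (k - i)) + ~~ onS)%N else 0%N.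

Definition block_agree (b : bool * 'I_k * 'I_k) (N N' : 'M[F]_sS * 'M[F]_sT) :=
  let: (onS, i, j) := b in
  if onS then submxblock N.1 i j = submxblock N'.1 i j
  else submxblock N.2 i j = submxblock N'.2 i j.

Lemma pencil_step_local b N N' :
  (forall b', (block_rank b' < block_rank b)%N -> block_agree b' N N') ->
  block_agree b (pencil_step N) (pencil_step N').
Proof.
case: b => [[[] i j]] agree_lt /=; rewrite !mxblockK; case: ifP => // lt_ij.
  apply: eq_bigr => l /eqP /= l_succ; congr (_ *m _); rewrite !submxblockB.
  congr (_ - _); apply: (submxblock_mulr_eq A_upper) => m le_m.
  rewrite !submxblockD; congr (_ + _); apply: (agree_lt (false, m, l)).
  by rewrite /= lt_ij; case: ifP; move: (ltn_ord i) (ltn_ord m); lia.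
congr (_ *m _); rewrite !submxblockB; congr (_ - _).
  apply: (submxblock_mull_eq (block_diag_upper E)) => m le_m.
  apply: (agree_lt (true, i, m)).
  by rewrite /= lt_ij; case: ifP; move: (ltn_ord i) (ltn_ord m); lia.
apply: (submxblock_mulr_eq (block_upper_sub_diag E_upper)) => m le_m.
rewrite !submxblockD; congr (_ + _); apply: (agree_lt (false, m, j)).
by rewrite /= lt_ij; case: ifP; move: (ltn_ord i) (ltn_ord m); lia.
Qed.

Lemma pencil_step_fixpoint : exists NS NT, pencil_step (NS, NT) = (NS, NT).
Proof.
have rank_lt b : (block_rank b < 6 * k)%N.
  by case: b => [[b i j]] /=; case: ifP; move: (ltn_ord i) (ltn_ord j); lia.
have agree_all := iter_fixpoint_by_rank pencil_step_local rank_lt (0, 0).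
set N := iter _ _ _ in agree_all; exists N.1, N.2; rewrite -surjective_pairing.
by case: N agree_all => NS NT agree_all; congr pair; apply/mxblockP => i j;
  [exact: (agree_all (true, i, j)) | exact: (agree_all (false, i, j))].
Qed.

Section StepFixpoint.
Variables (NS : 'M[F]_sS) (NT : 'M[F]_sT).
Hypothesis step_fix : pencil_step (NS, NT) = (NS, NT).

Lemma fixpoint_S_upper : block_upper 1 NS.
Proof.
move=> i l lt_l; rewrite -[NS](congr1 fst step_fix) /= mxblockK ifN //.
by rewrite -leqNgt; lia.
Qed.

Lemma fixpoint_T_upper : block_upper 1 NT.
Proof.
move=> i j lt_j; rewrite -[NT](congr1 snd step_fix) /= mxblockK ifN //.
by rewrite -leqNgt; lia.
Qed.

Lemma fixpoint_Asup : NS *m Asup = A *m (1%:M + NT) - Asup.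
Proof.
apply/mxblockP => i j; have [lt_j | ge_j] := ltnP j (i + 2).
  have rhs_upper : block_upper 2 (A *m (1%:M + NT) - Asup).
    rewrite mulmxDr mulmx1 addrAC.
    apply: block_upperD (block_upper_sub_superdiag A_upper) _.
    exact: block_upper_mul A_upper fixpoint_T_upper.
  have lhs_upper := block_upper_mul fixpoint_S_upper (block_superdiag_upper A).
  by rewrite rhs_upper ?lhs_upper.
have lt_l : (j.-1 < k)%N by move: (ltn_ord j); lia.
pose l := Ordinal lt_l; have l_succ : val j = (val l).+1 by rewrite /=; lia.
rewrite submxblock_mul (bigD1 l) //= big1 ?addr0 => [|l' ne_l']; last first.
  rewrite mxblockK ifN ?mulmx0 //; apply/eqP => /= j_succ.
  by case/eqP: ne_l'; apply/val_inj; rewrite /=; lia.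
rewrite mxblockK ifT; last exact/eqP.
rewrite -{1}[NS](congr1 fst step_fix) /= mxblockK ifT; last by rewrite /=; lia.
rewrite (big_pred1 j) => [|j']; last by rewrite /= -l_succ val_eqE.
by rewrite -mulmxA mulVpmx ?mulmx1 //; apply: A_stair_full.
Qed.

Lemma fixpoint_Ediag : Ediag *m NT = NS *m Ediag - (E - Ediag) *m (1%:M + NT).
Proof.
apply/mxblockP => i j; have [lt_ij | ge_ij] := ltnP i j; last first.
  have rhs_upper : block_upper 1 (NS *m Ediag - (E - Ediag) *m (1%:M + NT)).
    apply: block_upperB.
      exact: block_upper_mul fixpoint_S_upper (block_diag_upper E).
    rewrite mulmxDr mulmx1; apply: block_upperD (block_upper_sub_diag E_upper) _.
    apply: block_upperW (block_upper_mul (block_upper_sub_diag E_upper) _) => //.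
    exact: fixpoint_T_upper.
  have lt_j : (j < i + 1)%N by lia.
  by rewrite rhs_upper ?(block_upper_mul (block_diag_upper E) fixpoint_T_upper).
rewrite submxblock_mul (bigD1 i) //= big1 ?addr0 => [|l ne_li]; last first.
  by rewrite mxblockK eq_sym (negbTE ne_li) mul0mx.
rewrite mxblockK eqxx -{1}[NT](congr1 snd step_fix) /= mxblockK lt_ij.
by rewrite mulmxA mulmxVp ?mul1mx.
Qed.

End StepFixpoint.

Lemma pencil_block_bidiagonal : exists (S : 'M[F]_sS) (T : 'M[F]_sT),
  [/\ unit_upper_tri S, unit_upper_tri T,
      A *m T = S *m Asup & E *m T = S *m Ediag].
Proof.
have [NS [NT step_fix]] := pencil_step_fixpoint.
exists (1%:M + NS), (1%:M + NT); split.
- exact/unit_upper_tri_add1/block_upper1_entry/(fixpoint_S_upper step_fix).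
- exact/unit_upper_tri_add1/block_upper1_entry/(fixpoint_T_upper step_fix).
- by rewrite mulmxDl mul1mx (fixpoint_Asup step_fix) [RHS]addrC subrK.
have NS_Ediag : NS *m Ediag = Ediag *m NT + (E - Ediag) *m (1%:M + NT).
  by rewrite (fixpoint_Ediag step_fix) subrK.
rewrite mulmxDl mul1mx NS_Ediag addrA -{1}[Ediag]mulmx1 -mulmxDr -mulmxDl.
by rewrite [Ediag + _]addrC subrK.
Qed.

End PencilReduction.

Theorem lemma4p1 (k : nat) (s t : 'I_k -> nat)
  (A E : 'M[CC]_(\sum_(i < k) s i, \sum_(j < k) t j)) :
  (0 < k)%N ->
  (* t_1 >= s_1 >= t_2 >= s_2 >= ... >= t_k >= s_k >= 0 *)
  (forall i : 'I_k, (s i <= t i)%N) ->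
  (forall i j : 'I_k, val j = (val i).+1 -> (t j <= s i)%N) ->
  (* blocks strictly below the block diagonal vanish, for both matrices *)
  (forall i j : 'I_k, (j < i)%N ->
     submxblock A i j = 0 /\ submxblock E i j = 0) ->
  (* the block-diagonal blocks of A vanish *)
  (forall i : 'I_k, submxblock A i i = 0) ->
  (* A_{i,i+1} = [hat A_{i,i+1}; 0], hat A_{i,i+1} square upper triangular invertible *)
  (forall i j : 'I_k, val j = (val i).+1 ->
     (forall (r : 'I_(s i)) (c : 'I_(t j)), (t j <= r)%N -> submxblock A i j r c = 0)
     /\ upper_tri (topblock (t j) (submxblock A i j))
     /\ topblock (t j) (submxblock A i j) \in unitmx) ->
  (* E_{i,i} = [0, hat E_{i,i}], hat E_{i,i} square upper triangular invertible *)
  (forall i : 'I_k,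
     (forall (r : 'I_(s i)) (c : 'I_(t i)), (c < t i - s i)%N -> submxblock E i i r c = 0)
     /\ upper_tri (rightblock (s i) (submxblock E i i))
     /\ rightblock (s i) (submxblock E i i) \in unitmx) ->
  exists (S : 'M[CC]_(\sum_(i < k) s i)) (T : 'M[CC]_(\sum_(j < k) t j)),
    unit_upper_tri S /\ unit_upper_tri T /\
    (forall i j : 'I_k,
       submxblock (invmx S *m A *m T) i j =
         (if val j == (val i).+1 then submxblock A i j else 0)
       /\ (j != i -> submxblock (invmx S *m E *m T) i j = 0)) /\
    (forall i : 'I_k, submxblock (invmx S *m E *m T) i i = submxblock E i i).
Proof.
move=> _ _ _ lower_zero A_diag_zero A_stair E_stair.
have A_upper : block_upper 1 A.
  move=> i j; rewrite addn1 ltnS leq_eqVlt => /orP[/eqP ij | /lower_zero[] //].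
  by have -> : j = i by apply/val_inj.
have E_upper : block_upper 0 E by move=> i j; rewrite addn0 => /lower_zero[].
have A_stair_full l j : val j = (val l).+1 -> row_full (submxblock A l j).
  by move=> /A_stair[_ [_]]; apply: row_full_topblock.
have E_diag_free i : row_free (submxblock E i i).
  by have [_ [_]] := E_stair i; apply: row_free_rightblock.
have [S [T [S_tri T_tri AT ET]]] :=
  pencil_block_bidiagonal A_upper E_upper A_stair_full E_diag_free.
exists S, T; split=> //; split=> //.
have S_unit := unit_upper_tri_unitmx S_tri.
rewrite -!mulmxA AT ET !mulKmx //.
split=> [i j | i]; last by rewrite mxblockK eqxx.
by rewrite !mxblockK; split=> // /negbTE; rewrite eq_sym => ->.
Qed.
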